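(* Let $k\ge 3$ and let $D$ be a digraph on $n$ vertices with $\delta^0(D)\ge\lceil (n+k)/2\rceil-1$. Let $S=(s_1,\dots,s_k)$ be a sequence of distinct vertices of $D$, let $C$ be a longest $S$-cycle in $D$, suppose $C$ is not Hamiltonian, and let $H$ be the subdigraph of $D$ induced by $V(D)\setminus V(C)$. For $i\in\mathbb{N}$ let $F_i$ be the set of vertices of $C$ which receive an edge from at least $i$ vertices of $H$, and $T_i$ the set of vertices of $C$ which send an edge to at least $i$ vertices of $H$. Suppose $x_1,x_2\in T_3$ and $y_1,y_2\in F_3$ are distinct vertices on $C$. Then $D$ contains vertex-disjoint paths $P_1,P_2$, where $P_i$ is a directed $x_i$-$y_i$ path of length at least $2$, such that all inner vertices of $P_1$ and $P_2$ lie in $H$. Moreover, if $|H|\ge 15$ and even $x_1,x_2\in T_8$ and $y_1,y_2\in F_8$, then such paths can be found which additionally satisfy $|P_1\cup P_2|\ge |H|/6$.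
   Context: Digraphs have no loops and at most one edge in each direction between any two vertices; paths and cycles are directed; the length of a path is its number of edges, and $|P|$ denotes its number of vertices. $\delta^0(D)=\min\{\delta^+(D),\delta^-(D)\}$. An $S$-cycle is a directed cycle in $D$ encountering $s_1,\dots,s_k$ in this order. *)

From mathcomp Require Import all_boot.
Set Implicit Arguments. Unset Strict Implicit. Unset Printing Implicit Defensive.

(* A digraph on a finite vertex type T is a loopless relation e : rel T
   (e u v means there is an edge u -> v; at most one edge per direction). *)

Definition outdeg (T : finType) (e : rel T) (v : T) : nat := #|[set w | e v w]|.
Definition indeg (T : finType) (e : rel T) (v : T) : nat := #|[set w | e w v]|.

Definition min_semideg_ge (T : finType) (e : rel T) (m : nat) : Prop :=
  forall v : T, m <= outdeg e v /\ m <= indeg e v.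

(* A directed cycle given by the cyclic sequence of its distinct vertices
   c = [:: c_0; ...; c_{l-1}] with edges c_0->c_1->...->c_{l-1}->c_0. *)
Definition dcycle (T : finType) (e : rel T) (c : seq T) : bool :=
  [&& uniq c, 2 <= size c & cycle e c].

(* An S-cycle: a directed cycle encountering s_1, ..., s_k in this (cyclic) order. *)
Definition S_cycle (T : finType) (e : rel T) (s c : seq T) : Prop :=
  dcycle e c /\ exists i, subseq s (rot i c).

Definition Fset (T : finType) (e : rel T) (c : seq T) (i : nat) : {set T} :=
  [set v | (v \in c) && (i <= #|[set h | (h \notin c) && e h v]|)].

Definition Tset (T : finType) (e : rel T) (c : seq T) (i : nat) : {set T} :=
  [set v | (v \in c) && (i <= #|[set h | (h \notin c) && e v h]|)].

(* The directed path x :: q ++ [:: y] (q = inner vertices) is a path of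
   length >= 2 whose inner vertices all lie in H (i.e. off c). *)
Definition H_path (T : finType) (e : rel T) (c : seq T) (x y : T) (q : seq T) : bool :=
  [&& path e x (rcons q y), uniq (x :: rcons q y), q != [::]
    & all (fun v => v \notin c) q].

Definition Hsize (T : finType) (c : seq T) : nat := #|[set v : T | v \notin c]|.

From Stdlib Require Import Classical_Prop.
From mathcomp Require Import all_boot zify.
Set Implicit Arguments. Unset Strict Implicit. Unset Printing Implicit Defensive.

(* Let H be the digraph induced outside C.  A path of H from a to b cannot be
   spliced into C between an in-neighbour v of a and the successor of v, when
   that successor is an out-neighbour of b; so a and b have at most |C|
   neighbours on C together.  With the semidegree bound this gives
   |H| < d^-_H(a) + d^+_H(b) whenever b is reachable from a in H, hence H is
   strongly connected and the inequality holds for all pairs.  In such a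
   digraph two non-adjacent vertices have at least three common 2-path
   midpoints, which suffices to route two disjoint paths of length at most two
   from N^+(x_i) \cap H to N^-(y_i) \cap H.  For such a linkage with the most
   vertices, maximality forbids detours through the set W of unused vertices
   of H; counting again shows that W is strongly connected and then that the
   linkage covers more than half of H.  This gives the second statement under
   the hypotheses of the first. *)

Lemma exists_avoid2 (T : finType) (X : {set T}) a b :
  2 < #|X| -> exists x, [&& x \in X, x != a & x != b].
Proof.
move=> X_gt2; apply/existsP; apply: contraTT X_gt2 => /existsPn X_ab.
have /subset_leq_card : X \subset [set a; b].
  apply/subsetP => x xX; move: (X_ab x); rewrite xX !inE /=.
  by case: eqP => //= _; case: eqP.
by rewrite cards2 -leqNgt; case: (a != b) => /=; lia.
Qed.

Lemma card_disjoint_sub (T : finType) (X Y Z : {set T}) :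
  X \subset Z -> Y \subset Z -> [disjoint X & Y] -> #|X| + #|Y| <= #|Z|.
Proof.
move=> XZ YZ; rewrite -(leq_card_setU X Y).2 => /eqP <-.
by apply: subset_leq_card; rewrite subUset XZ YZ.
Qed.

Lemma meet_of_card (T : finType) (X Y Z : {set T}) :
  X \subset Z -> Y \subset Z -> #|Z| < #|X| + #|Y| -> exists2 z, z \in X & z \in Y.
Proof.
move=> XZ YZ; case: (boolP [disjoint X & Y]) => [XY|/pred0Pn[z /andP[]]].
  by rewrite ltnNge card_disjoint_sub.
by exists z.
Qed.

Lemma card_mem_seq (T : finType) (s : seq T) (A : pred T) : uniq s ->
  #|[set x | (x \in s) && A x]| = count A s.
Proof.
move=> us; rewrite -size_filter -(card_uniqP (filter_uniq A us)) -cardsE.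
by apply: eq_card => x; rewrite !inE mem_filter andbC.
Qed.

Lemma card_split (T : finType) (P A : pred T) :
  #|[set x | A x]| = #|[set x | P x && A x]| + #|[set x | ~~ P x && A x]|.
Proof.
rewrite -(cardsID [set x | P x] [set x | A x]); congr (_ + _);
by apply: eq_card => x; rewrite !inE andbC.
Qed.

Lemma not_path_split (T : eqType) (R : rel T) a q : ~~ path R a q ->
  exists l1 y l2, q = l1 ++ y :: l2 /\ ~~ R (last a l1) y.
Proof.
elim: q a => [|y q IHq] a //=; case: (boolP (R a y)) => /= Ray np.
  by have [l1 [z [l2 [-> Rz]]]] := IHq y np; exists (y :: l1), z, l2.
by exists [::], y, q.
Qed.

Lemma count_lt_size (T : eqType) (a : pred T) (s : seq T) x :
  x \in s -> ~~ a x -> count a s < size s.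
Proof.
move=> xs nax; rewrite -(count_predC a s) -[X in X < _]addn0 ltn_add2l -has_count.
by apply/hasP; exists x.
Qed.

Lemma count_cons_le1 (T : eqType) (P : pred T) a q : ~~ has P q -> count P (a :: q) <= 1.
Proof. by rewrite has_count -eqn0Ngt /= => /eqP->; case: (P a). Qed.

Lemma count_belast_le1 (T : eqType) (P : pred T) a q :
  ~~ has P (belast a q) -> count P (a :: q) <= 1.
Proof.
rewrite lastI -cats1 count_cat has_count -eqn0Ngt => /eqP->.
by rewrite /=; case: (P _).
Qed.

Lemma perm_two_paths (T : eqType) (x1 y1 x2 y2 : T) (Q1 Q2 : seq T) :
  perm_eq ((x1 :: rcons Q1 y1) ++ (x2 :: rcons Q2 y2)) ([:: x1; y1; x2; y2] ++ Q1 ++ Q2).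
Proof.
rewrite /= perm_cons -cats1 -catA perm_catCA /= perm_cons -cat1s perm_catCA /= perm_cons.
by rewrite -cats1 catA perm_catC.
Qed.

Section NandPath.
Variables (T : eqType) (P Q : pred T).

Definition nand_rel := [rel x y | ~~ (P x && Q y)].

Lemma nand_path_count a q :
  path nand_rel a q -> count P (a :: q) + count Q (a :: q) <= (size (a :: q)).+1.
Proof.
suff: path nand_rel a q -> count P (a :: q) + count Q q <= size q + 1.
  by move=> h /h /=; case: (Q a) => /=; lia.
elim: q a => [|y q IHq] a /=; first by case: (P a).
by case/andP => h /IHq /=; move: h; case: (P a); case: (Q y) => //=; lia.
Qed.

Lemma nand_path_all_l a q : path nand_rel a q -> all P (a :: q) -> all (predC Q) q.
Proof.
elim: q a => [|y q IHq] a //= /andP[h p] /andP[Pa /andP[Py Pq]].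
by move: h; rewrite /= Pa /= => ->; apply: (IHq y p); rewrite /= Py.
Qed.

Lemma nand_path_all_r a q : path nand_rel a q -> all Q (a :: q) -> all (predC P) (belast a q).
Proof.
elim: q a => [|y q IHq] a //= /andP[h p] /andP[Qa /andP[Qy Qq]].
by move: h; rewrite /= Qy andbT => ->; apply: (IHq y p); rewrite /= Qy.
Qed.

End NandPath.

Section Digraph.
Variables (T : finType) (e : rel T).
Hypothesis e_irr : irreflexive e.

Definition indeg_in (W : {set T}) v := #|[set u in W | e u v]|.
Definition outdeg_in (W : {set T}) u := #|[set w in W | e u w]|.
Definition induced (W : {set T}) := [rel u v | [&& u \in W, v \in W & e u v]].
Definition midpoints (W : {set T}) u v := [set w in W | e u w && e w v].

Definition reach (W : {set T}) a := [set x in W | connect (induced W) a x].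
Definition coreach (W : {set T}) b := [set x in W | connect (induced W) x b].

Lemma outdeg_in_reach (W : {set T}) a x : x \in reach W a -> outdeg_in W x < #|reach W a|.
Proof.
rewrite inE => /andP[xW ax]; apply: proper_card; apply/properP; split.
  apply/subsetP => y; rewrite !inE => /andP[yW xy]; rewrite yW.
  by apply: connect_trans ax (connect1 _); rewrite /= xW yW.
by exists x; rewrite !inE ?e_irr ?andbF ?xW.
Qed.

Lemma indeg_in_coreach (W : {set T}) b x : x \in coreach W b -> indeg_in W x < #|coreach W b|.
Proof.
rewrite inE => /andP[xW xb]; apply: proper_card; apply/properP; split.
  apply/subsetP => y; rewrite !inE => /andP[yW yx]; rewrite yW.
  by apply: connect_trans (connect1 _) xb; rewrite /= xW yW.
by exists x; rewrite !inE ?e_irr ?andbF ?xW.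
Qed.

Lemma reach_sub (W : {set T}) a : reach W a \subset W.
Proof. by apply/subsetP => x; rewrite inE => /andP[]. Qed.

Lemma coreach_sub (W : {set T}) b : coreach W b \subset W.
Proof. by apply/subsetP => x; rewrite inE => /andP[]. Qed.

Lemma mem_reach (W : {set T}) a : a \in W -> a \in reach W a.
Proof. by move=> aW; rewrite inE aW connect0. Qed.

Lemma mem_coreach (W : {set T}) b : b \in W -> b \in coreach W b.
Proof. by move=> bW; rewrite inE bW connect0. Qed.

Lemma card_coreach_reach (W : {set T}) a b : ~~ connect (induced W) a b ->
  #|coreach W b| + #|reach W a| <= #|W|.
Proof.
move=> nab; apply: card_disjoint_sub (coreach_sub _ _) (reach_sub _ _) _.
apply/pred0P => z /=; rewrite !inE.
by apply/negP => /andP[/andP[_ zb] /andP[_ az]]; rewrite (connect_trans az zb) in nab.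
Qed.

(* Applied to [a = b] the degree condition makes [reach W a] and [coreach W a]
   overlap heavily; two such overlaps force [connect b a], and then the
   condition for the pair [(b, a)] contradicts [card_coreach_reach]. *)
Lemma degree_sum_strongly_connected (W : {set T}) :
  (forall a b, a \in W -> b \in W -> connect (induced W) a b ->
     #|W| <= indeg_in W a + outdeg_in W b + 1) ->
  forall a b, a \in W -> b \in W -> connect (induced W) a b.
Proof.
move=> deg_sum a b aW bW; apply/idPn => nab.
have big x : x \in W -> #|W| < #|coreach W x| + #|reach W x|.
  move=> xW; have := deg_sum x x xW xW (connect0 _ _).
  have := outdeg_in_reach (mem_reach xW); have := indeg_in_coreach (mem_coreach xW); lia.
have [z] : exists2 z, z \in reach W b & z \in coreach W a.
  apply: meet_of_card (reach_sub _ _) (coreach_sub _ _) _.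
  by have := card_coreach_reach nab; have := big a aW; have := big b bW; lia.
rewrite !inE => /andP[_ bz] /andP[_ za].
have := deg_sum b a bW aW (connect_trans bz za); have := card_coreach_reach nab.
have := outdeg_in_reach (mem_reach aW); have := indeg_in_coreach (mem_coreach bW); lia.
Qed.

Lemma connect_induced_path (W : {set T}) a b : a \in W -> connect (induced W) a b ->
  exists r, [/\ path e a r, last a r = b, uniq (a :: r) & {subset a :: r <= W}].
Proof.
move=> aW /connectP[p pp ->]; case: (shortenP pp) => r pr ur _.
exists r; split=> //; first by apply: sub_path pr => x y /and3P[].
move=> z; rewrite inE => /predU1P[->//|]; elim: r a {aW ur pp} pr => [|y r IHr] x //=.
by case/andP=> /and3P[_ yW _] pr; rewrite inE => /predU1P[->//|]; apply: IHr pr.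
Qed.

Lemma card_midpoints (W : {set T}) u v : u \in W -> v \in W -> u != v -> ~~ e u v ->
  #|W| < indeg_in W v + outdeg_in W u -> 3 <= #|midpoints W u v|.
Proof.
move=> uW vW nuv nev deg.
pose A := [set w in W | e u w]; pose B := [set w in W | e w v].
have -> : midpoints W u v = A :&: B.
  by apply/setP => w; rewrite !inE; case: (w \in W).
have uvAB : [disjoint [set u; v] & A :|: B].
  apply/pred0P => x /=; rewrite !inE; apply/negP => /andP[/orP[]/eqP-> ];
  by rewrite e_irr ?(negbTE nev) !andbF.
have uvW : [set u; v] \subset W by rewrite subUset !sub1set uW vW.
have ABW : A :|: B \subset W.
  by rewrite subUset; apply/andP; split; apply/subsetP => x; rewrite inE => /andP[].
have := card_disjoint_sub uvW ABW uvAB; rewrite cards2 nuv cardsU.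
rewrite /indeg_in /outdeg_in -/A -/B in deg.
have := subset_leq_card (subsetIl A B); have := subset_leq_card (subsetIr A B); lia.
Qed.


Definition ore_dense (H : {set T}) :=
  forall u v, u \in H -> v \in H -> #|H| < indeg_in H v + outdeg_in H u.

Definition hpath (H X Y : {set T}) a q :=
  [/\ a \in X, last a q \in Y, path e a q & all (fun x => x \in H) (a :: q)].

Definition linkage (H X1 Y1 X2 Y2 : {set T}) a1 q1 a2 q2 :=
  [/\ hpath H X1 Y1 a1 q1, hpath H X2 Y2 a2 q2 & uniq ((a1 :: q1) ++ (a2 :: q2))].

Lemma linkage_sym (H X1 Y1 X2 Y2 : {set T}) a1 q1 a2 q2 :
  linkage H X1 Y1 X2 Y2 a1 q1 a2 q2 -> linkage H X2 Y2 X1 Y1 a2 q2 a1 q1.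
Proof. by case=> P1 P2 u; split => //; rewrite uniq_catC. Qed.

Section ShortLinkage.
Variables (H X1 Y1 X2 Y2 : {set T}).
Hypothesis H_ore : ore_dense H.
Hypotheses (X1H : X1 \subset H) (Y1H : Y1 \subset H) (X2H : X2 \subset H) (Y2H : Y2 \subset H).
Hypotheses (X1_gt2 : 2 < #|X1|) (Y1_gt2 : 2 < #|Y1|) (X2_gt2 : 2 < #|X2|) (Y2_gt2 : 2 < #|Y2|).

Lemma midpoints_ge3 u v : u \in H -> v \in H -> u != v -> ~~ e u v -> 3 <= #|midpoints H u v|.
Proof. by move=> uH vH nuv nev; apply: card_midpoints => //; apply: H_ore. Qed.

Lemma short_path_avoid2 u v a b : u \in H -> v \in H -> [&& a != u, b != u, a != v & b != v] ->
  exists q, [/\ path e u q, last u q = v, all (fun x => x \in H) q, uniq (u :: q)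
              & (a \notin q) && (b \notin q)].
Proof.
move=> uH vH /and4P[au bu av bv].
case: (eqVneq u v) => [<-|nuv]; first by exists [::].
case: (boolP (e u v)) => [euv|neuv].
  by exists [:: v]; rewrite /= euv vH !inE nuv av bv.
have [w /and3P[]] := exists_avoid2 a b (midpoints_ge3 uH vH nuv neuv).
rewrite inE => /and3P[wH uw wv] wa wb.
have wv' : w != v by apply: contraTneq wv => ->; rewrite e_irr.
have uw' : u != w by apply: contraTneq uw => ->; rewrite e_irr.
exists [:: w; v]; rewrite /= uw wv wH vH !inE !negb_or (eq_sym a w) (eq_sym b w).
by rewrite wa wb av bv nuv uw' wv'.
Qed.

Lemma linkage_of_short_first u1 v1 : u1 \in X1 -> v1 \in Y1 -> (u1 == v1) || e u1 v1 ->
  exists a1 q1 a2 q2, linkage H X1 Y1 X2 Y2 a1 q1 a2 q2.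
Proof.
move=> u1X v1Y uv1; have u1H := subsetP X1H _ u1X; have v1H := subsetP Y1H _ v1Y.
have [u2 /and3P[u2X u2u1 u2v1]] := exists_avoid2 u1 v1 X2_gt2.
have [v2 /and3P[v2Y v2u1 v2v1]] := exists_avoid2 u1 v1 Y2_gt2.
have avoid : [&& u1 != u2, v1 != u2, u1 != v2 & v1 != v2].
  by rewrite !(eq_sym u1) !(eq_sym v1) u2u1 u2v1 v2u1 v2v1.
have [q2 [p2 l2 q2H uq2 /andP[u1q2 v1q2]]] :=
  short_path_avoid2 (subsetP X2H _ u2X) (subsetP Y2H _ v2Y) avoid.
have P2 : hpath H X2 Y2 u2 q2 by split; rewrite ?l2 //= (subsetP X2H _ u2X).
case: eqP uv1 => [eq_uv _|/eqP nuv /= e1].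
  subst v1; exists u1, [::], u2, q2; split => //; first by split; rewrite //= u1H.
  by move: uq2; rewrite /= inE negb_or u1q2 eq_sym u2u1 => ->.
exists u1, [:: v1], u2, q2; split => //; first by split; rewrite //= ?u1H ?v1H ?e1.
by move: uq2; rewrite /= !inE !negb_or nuv u1q2 v1q2 !(eq_sym _ u2) u2u1 u2v1 => ->.
Qed.

Lemma midpoints_neq (W : {set T}) u v w : w \in midpoints W u v -> (w != u) && (w != v).
Proof.
rewrite inE => /and3P[_ uw wv]; apply/andP; split.
  by apply: contraTneq uw => ->; rewrite e_irr.
by apply: contraTneq wv => ->; rewrite e_irr.
Qed.

Section FarPairs.
Hypothesis X1Y1_far : forall u v, u \in X1 -> v \in Y1 -> (u != v) && ~~ e u v.
Hypothesis X2Y2_far : forall u v, u \in X2 -> v \in Y2 -> (u != v) && ~~ e u v.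

Lemma midpoints_far_ge3 (X Y : {set T}) u v : X \subset H -> Y \subset H ->
  (forall u v, u \in X -> v \in Y -> (u != v) && ~~ e u v) ->
  u \in X -> v \in Y -> 3 <= #|midpoints H u v|.
Proof.
move=> XH YH far uX vY; have /andP[uv ne_uv] := far u v uX vY.
exact: midpoints_ge3 (subsetP XH _ uX) (subsetP YH _ vY) uv ne_uv.
Qed.

Lemma linkage_of_midpoints u1 v1 u2 v2 w1 w2 :
  u1 \in X1 -> v1 \in Y1 -> u2 \in X2 -> v2 \in Y2 ->
  w1 \in midpoints H u1 v1 -> w2 \in midpoints H u2 v2 ->
  [&& u1 != u2, v1 != u2, u1 != v2 & v1 != v2] ->
  [&& w1 != u2, w1 != w2 & w1 != v2] -> (u1 != w2) && (v1 != w2) ->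
  exists a1 q1 a2 q2, linkage H X1 Y1 X2 Y2 a1 q1 a2 q2.
Proof.
move=> u1X v1Y u2X v2Y w1C1 w2C2.
move=> /and4P[u1u2 v1u2 u1v2 v1v2] /and3P[w1u2 w1w2 w1v2] /andP[u1w2 v1w2].
have /andP[u1v1 _] := X1Y1_far u1X v1Y; have /andP[u2v2 _] := X2Y2_far u2X v2Y.
have /andP[w1u1 w1v1] := midpoints_neq w1C1; have /andP[w2u2 w2v2] := midpoints_neq w2C2.
move: w1C1 w2C2; rewrite !inE => /and3P[w1H uw1 wv1] /and3P[w2H uw2 wv2].
exists u1, [:: w1; v1], u2, [:: w2; v2]; split.
- by split; rewrite //= ?uw1 ?wv1 ?w1H ?(subsetP X1H _ u1X) ?(subsetP Y1H _ v1Y).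
- by split; rewrite //= ?uw2 ?wv2 ?w2H ?(subsetP X2H _ u2X) ?(subsetP Y2H _ v2Y).
- rewrite /= !inE !negb_or u1v1 u1u2 u1w2 u1v2 w1u2 w1w2 w1v2 v1u2 v1w2 v1v2 u2v2.
  by rewrite !(eq_sym u1 w1) !(eq_sym u2 w2) w1u1 w1v1 w2u2 w2v2.
Qed.

Lemma linkage_off_midpoints u1 v1 u2 v2 :
  u1 \in X1 -> v1 \in Y1 -> u2 \in X2 -> v2 \in Y2 ->
  [&& u1 != u2, v1 != u2, u1 != v2 & v1 != v2] -> u2 \notin midpoints H u1 v1 ->
  exists a1 q1 a2 q2, linkage H X1 Y1 X2 Y2 a1 q1 a2 q2.
Proof.
move=> u1X v1Y u2X v2Y distinct u2C1.
have [w2 /and3P[w2C2 w2u1 w2v1]] :=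
  exists_avoid2 u1 v1 (midpoints_far_ge3 X2H Y2H X2Y2_far u2X v2Y).
have [w1 /and3P[w1C1 w1v2 w1w2]] :=
  exists_avoid2 v2 w2 (midpoints_far_ge3 X1H Y1H X1Y1_far u1X v1Y).
apply: (linkage_of_midpoints u1X v1Y u2X v2Y w1C1 w2C2 distinct).
  by rewrite w1w2 w1v2 /= andbT; apply: contraNneq u2C1 => <-.
by rewrite !(eq_sym _ w2) w2u1 w2v1.
Qed.

Lemma card_gt2_sub3 (X : {set T}) a b c :
  2 < #|X| -> {subset X <= [:: a; b; c]} -> [/\ a \in X, b \in X & c \in X].
Proof.
move=> X_gt2 Xabc; have mem x y z : {subset X <= [:: x; y; z]} -> x \in X.
  move=> sub; have [w /and3P[wX wy wz]] := exists_avoid2 y z X_gt2.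
  by move: (sub w wX); rewrite !inE (negbTE wy) (negbTE wz) !orbF => /eqP <-.
by split; [apply: (mem a b c) | apply: (mem b a c) | apply: (mem c a b)] => w /Xabc;
  rewrite !inE => /or3P[]/eqP->; rewrite eqxx ?orbT.
Qed.

(* Fix [u1], [v1], [v2] and try [u2] off [midpoints H u1 v1].  Otherwise the
   two midpoint sets can only block each other if [midpoints H u2 v2] is
   [{u1, v1, w1}] and [midpoints H u1 v1] is [{u2, v2, w1}]; but midpoints of
   [u2] and [v2] are not in [X2], so any [u2'] of [X2] other than [u2] and
   [w1] lies off [midpoints H u1 v1]. *)
Lemma linkage_of_far_pairs : exists a1 q1 a2 q2, linkage H X1 Y1 X2 Y2 a1 q1 a2 q2.
Proof.
have [u1 u1X] : exists u1, u1 \in X1 by apply/card_gt0P; lia.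
have [v1 v1Y] : exists v1, v1 \in Y1 by apply/card_gt0P; lia.
have [v2 /and3P[v2Y v2u1 v2v1]] := exists_avoid2 u1 v1 Y2_gt2.
have off u2 : u2 \in X2 -> (u2 != u1) && (u2 != v1) -> u2 \notin midpoints H u1 v1 ->
    exists a1 q1 a2 q2, linkage H X1 Y1 X2 Y2 a1 q1 a2 q2.
  move=> u2X /andP[u2u1 u2v1]; apply: linkage_off_midpoints u1X v1Y u2X v2Y _.
  by rewrite !(eq_sym u1) !(eq_sym v1) u2u1 u2v1 v2u1 v2v1.
have [u2 /and3P[u2X u2u1 u2v1]] := exists_avoid2 u1 v1 X2_gt2.
have [u2C1|] := boolP (u2 \in midpoints H u1 v1); last by apply: off; rewrite ?u2u1.
have distinct : [&& u1 != u2, v1 != u2, u1 != v2 & v1 != v2].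
  by rewrite !(eq_sym u1) !(eq_sym v1) u2u1 u2v1 v2u1 v2v1.
have [w1 /and3P[w1C1 w1u2 w1v2]] :=
  exists_avoid2 u2 v2 (midpoints_far_ge3 X1H Y1H X1Y1_far u1X v1Y).
have /andP[w1u1 w1v1] := midpoints_neq w1C1.
have [/existsP[w2 /and4P[w2C2 w2u1 w2v1 w2w1]]|/existsPn C2_sub] :=
  boolP [exists w2, [&& w2 \in midpoints H u2 v2, w2 != u1, w2 != v1 & w2 != w1]].
  apply: (linkage_of_midpoints u1X v1Y u2X v2Y w1C1 w2C2 distinct).
    by rewrite w1u2 w1v2 eq_sym w2w1.
  by rewrite !(eq_sym _ w2) w2u1 w2v1.
have {}C2_sub : {subset midpoints H u2 v2 <= [:: u1; v1; w1]}.
  move=> x xC2; move: (C2_sub x); rewrite xC2 /= !inE.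
  by case: (x == u1); case: (x == v1); case: (x == w1).
have [u1C2 v1C2 w1C2] :=
  card_gt2_sub3 (midpoints_far_ge3 X2H Y2H X2Y2_far u2X v2Y) C2_sub.
have [/existsP[w1' /and4P[w1'C1 w1'u2 w1'v2 w1'w1]]|/existsPn C1_sub] :=
  boolP [exists w, [&& w \in midpoints H u1 v1, w != u2, w != v2 & w != w1]].
  apply: (linkage_of_midpoints u1X v1Y u2X v2Y w1'C1 w1C2 distinct).
    by rewrite w1'u2 w1'v2 w1'w1.
  by rewrite !(eq_sym _ w1) w1u1 w1v1.
have C2_notin_X2 z : z \in midpoints H u2 v2 -> z \notin X2.
  rewrite inE => /and3P[_ _ zv2]; apply: contraL zv2 => zX2.
  by have /andP[_ ->] := X2Y2_far zX2 v2Y.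
have [u2' /and3P[u2'X u2'u2 u2'w1]] := exists_avoid2 u2 w1 X2_gt2.
apply: (off u2' u2'X).
  by apply/andP; split; apply: contraTneq u2'X => ->; apply: C2_notin_X2.
apply/negP => u2'C1; move: (C1_sub u2'); rewrite u2'C1 u2'u2 u2'w1 /= andbT.
by have /andP[-> _] := X2Y2_far u2'X v2Y.
Qed.

End FarPairs.

End ShortLinkage.

Lemma exists_linkage (H X1 Y1 X2 Y2 : {set T}) : ore_dense H ->
  X1 \subset H -> Y1 \subset H -> X2 \subset H -> Y2 \subset H ->
  2 < #|X1| -> 2 < #|Y1| -> 2 < #|X2| -> 2 < #|Y2| ->
  exists a1 q1 a2 q2, linkage H X1 Y1 X2 Y2 a1 q1 a2 q2.
Proof.
move=> H_ore X1H Y1H X2H Y2H X1_gt2 Y1_gt2 X2_gt2 Y2_gt2.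
have [/existsP[u /existsP[v /and3P[uX vY uv]]]|/existsPn far1] :=
  boolP [exists u, exists v, [&& u \in X1, v \in Y1 & (u == v) || e u v]].
  exact: (linkage_of_short_first H_ore X1H Y1H X2H Y2H X2_gt2 Y2_gt2 uX vY uv).
have [/existsP[u /existsP[v /and3P[uX vY uv]]]|/existsPn far2] :=
  boolP [exists u, exists v, [&& u \in X2, v \in Y2 & (u == v) || e u v]].
  have [a1 [q1 [a2 [q2 L]]]] :=
    linkage_of_short_first H_ore X2H Y2H X1H Y1H X1_gt2 Y1_gt2 uX vY uv.
  by exists a2, q2, a1, q1; apply: linkage_sym.
apply: linkage_of_far_pairs H_ore X1H Y1H X2H Y2H X1_gt2 Y1_gt2 X2_gt2 Y2_gt2 _ _.
  by move=> u v uX vY; move/existsPn/(_ v): (far1 u); rewrite uX vY negb_or.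
by move=> u v uX vY; move/existsPn/(_ v): (far2 u); rewrite uX vY negb_or.
Qed.




Definition longest_linkage (H X1 Y1 X2 Y2 : {set T}) a1 q1 a2 q2 :=
  linkage H X1 Y1 X2 Y2 a1 q1 a2 q2 /\
  forall b1 r1 b2 r2, linkage H X1 Y1 X2 Y2 b1 r1 b2 r2 -> size r1 + size r2 <= size q1 + size q2.

Lemma longest_linkage_sym (H X1 Y1 X2 Y2 : {set T}) a1 q1 a2 q2 :
  longest_linkage H X1 Y1 X2 Y2 a1 q1 a2 q2 -> longest_linkage H X2 Y2 X1 Y1 a2 q2 a1 q1.
Proof.
case=> /linkage_sym L long; split=> // b1 r1 b2 r2 /linkage_sym /long; lia.
Qed.

Definition outside (H : {set T}) (s : seq T) := [set x in H | x \notin s].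

Lemma outside_catC H (s1 s2 : seq T) : outside H (s1 ++ s2) = outside H (s2 ++ s1).
Proof. by apply/setP => x; rewrite !inE !mem_cat orbC. Qed.

Lemma uniq_cat_outside H (s r : seq T) : uniq r -> uniq s -> {subset r <= outside H s} ->
  uniq (r ++ s).
Proof.
move=> ur us rW; rewrite cat_uniq ur us andbT; apply/hasPn => z zs.
by apply/negP => /rW; rewrite inE zs andbF.
Qed.

Section Insertion.
Variables (H X1 Y1 X2 Y2 : {set T}) (a1 a2 : T) (q1 q2 : seq T).
Hypothesis L : longest_linkage H X1 Y1 X2 Y2 a1 q1 a2 q2.
Variables (w : T) (r : seq T).
Hypotheses (pr : path e w r) (ur : uniq (w :: r)).
Hypothesis rW : {subset w :: r <= outside H ((a1 :: q1) ++ (a2 :: q2))}.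

Let rH : all (fun x => x \in H) (w :: r).
Proof. by apply/allP => x /rW; rewrite inE => /andP[]. Qed.

Lemma longest_linkage_no_insertion l1 y l2 :
  q1 = l1 ++ y :: l2 -> e (last a1 l1) w -> e (last w r) y -> False.
Proof.
case: L => [[[a1X l1Y p1 h1] P2 u] long] def_q1 ew ey.
suff /long : linkage H X1 Y1 X2 Y2 a1 (l1 ++ w :: r ++ y :: l2) a2 q2.
  by rewrite def_q1 !size_cat /= size_cat /=; lia.
subst q1; split => //.
- split=> //.
  + by move: l1Y; rewrite !last_cat /= last_cat.
  + move: p1; rewrite !cat_path /= cat_path /= => /andP[-> /andP[_ ->]].
    by rewrite ew pr ey.
  + move: h1 rH; rewrite /= !all_cat /= all_cat /=.
    by move=> /and4P[-> -> -> ->] /andP[-> ->].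
- have -> : (a1 :: l1 ++ w :: r ++ y :: l2) ++ a2 :: q2 =
            (a1 :: l1) ++ (w :: r) ++ (y :: l2 ++ a2 :: q2) by rewrite /= -catA /= -catA.
  rewrite uniq_catCA (uniq_cat_outside (H := H)) //; first by move: u; rewrite /= -catA.
  by move=> x /rW; rewrite /= -catA.
Qed.

Lemma longest_linkage_no_prefix : w \in X1 -> e (last w r) a1 -> False.
Proof.
case: L => [[[a1X l1Y p1 h1] P2 u] long] wX ew.
suff /long : linkage H X1 Y1 X2 Y2 w (r ++ a1 :: q1) a2 q2 by rewrite size_cat /=; lia.
split => //.
- split=> //; first by rewrite last_cat.
  + by rewrite cat_path /= ew pr p1.
  + by rewrite -cat_cons all_cat rH h1.
- by rewrite -cat_cons -catA; apply: (uniq_cat_outside (H := H)).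
Qed.

Lemma longest_linkage_no_suffix : last w r \in Y1 -> e (last a1 q1) w -> False.
Proof.
case: L => [[[a1X l1Y p1 h1] P2 u] long] wY ew.
suff /long : linkage H X1 Y1 X2 Y2 a1 (q1 ++ w :: r) a2 q2 by rewrite size_cat /=; lia.
split => //.
- split=> //; first by rewrite last_cat.
  + by rewrite cat_path /= ew pr p1.
  + by rewrite -cat_cons all_cat h1 rH.
- by rewrite -cat_cons -catA uniq_catCA; apply: (uniq_cat_outside (H := H)).
Qed.

End Insertion.

Lemma card_sep_lt (W : {set T}) (P : pred T) u :
  u \in W -> ~~ P u -> #|[set w in W | P w]| < #|W|.
Proof.
move=> uW nPu; apply: proper_card; apply/properP; split.
  by apply/subsetP => x; rewrite inE => /andP[].
by exists u => //; rewrite inE (negbTE nPu) andbF.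
Qed.

Lemma outdeg_in_lt (W : {set T}) u : u \in W -> outdeg_in W u < #|W|.
Proof. by move=> uW; apply: card_sep_lt uW _; rewrite e_irr. Qed.

Lemma indeg_in_lt (W : {set T}) u : u \in W -> indeg_in W u < #|W|.
Proof. by move=> uW; apply: card_sep_lt uW _; rewrite /= e_irr. Qed.

Lemma card_outside (H : {set T}) (s : seq T) (P : pred T) :
  uniq s -> all (fun x => x \in H) s ->
  #|[set x in H | P x]| = #|[set x in outside H s | P x]| + count P s.
Proof.
move=> us sH; rewrite (card_split (fun x => x \in s)) addnC; congr (_ + _).
  by apply: eq_card => x; rewrite !inE; case: (x \in s); case: (x \in H).
rewrite card_mem_seq //; apply: eq_in_count => x xs /=.
by rewrite (allP sH x xs).
Qed.

Lemma longest_linkage_no_bypass (H X1 Y1 X2 Y2 : {set T}) a1 q1 a2 q2 w w' :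
  longest_linkage H X1 Y1 X2 Y2 a1 q1 a2 q2 ->
  w \in outside H ((a1 :: q1) ++ (a2 :: q2)) ->
  connect (induced (outside H ((a1 :: q1) ++ (a2 :: q2)))) w w' ->
  path (nand_rel (e^~ w) (e w')) a1 q1.
Proof.
move=> L wW ww'; apply/idPn => /not_path_split[l1 [y [l2 [def_q1 /negPn /andP[ew ew']]]]].
have [r [pr lr ur rW]] := connect_induced_path wW ww'.
move: ew'; rewrite -lr; exact: (longest_linkage_no_insertion L pr ur rW def_q1 ew).
Qed.

Section LongestLinkage.
Variables (H X1 Y1 X2 Y2 : {set T}) (a1 a2 : T) (q1 q2 : seq T).
Hypothesis H_ore : ore_dense H.
Hypotheses (X1H : X1 \subset H) (Y1H : Y1 \subset H).
Hypotheses (X1_gt2 : 2 < #|X1|) (Y1_gt2 : 2 < #|Y1|).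
Hypothesis L : longest_linkage H X1 Y1 X2 Y2 a1 q1 a2 q2.

Local Notation S := ((a1 :: q1) ++ (a2 :: q2)).
Local Notation W := (outside H S).

Let uS : uniq S. Proof. by case: L => [[]]. Qed.

Let SH : all (fun x => x \in H) S.
Proof. by case: L => [[[_ _ _ h1] [_ _ _ h2] _] _]; rewrite all_cat h1 h2. Qed.

Let SH_mem x : x \in S -> x \in H. Proof. exact: (allP SH). Qed.

Let WH x : x \in W -> x \in H. Proof. by rewrite inE => /andP[]. Qed.

Let card_H : #|H| = #|W| + size S.
Proof.
have setT_in (A : {set T}) : [set x in A | predT x] = A by apply/setP => x; rewrite !inE andbT.
by rewrite -count_predT -{1}(setT_in H) -(setT_in W); apply: card_outside.
Qed.

Let ore_S_W u v : u \in H -> v \in H -> size S + #|W| < indeg_in H v + outdeg_in H u.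
Proof. by move=> uH vH; rewrite addnC -card_H; apply: H_ore. Qed.

Let ore_S_W_contra d1 d2 c : d1 < size S -> d2 < #|W| + c -> c <= 2 ->
  size S + #|W| < d1 + d2 -> False.
Proof. by move: (size S) #|W| => s w; lia. Qed.

Let outdeg_H x : outdeg_in H x = outdeg_in W x + count (e x) S.
Proof. exact: card_outside uS SH. Qed.

Let indeg_H x : indeg_in H x = indeg_in W x + count (e^~ x) S.
Proof. exact: card_outside uS SH. Qed.

Lemma longest_linkage_no_bypass_both w w' : w \in W -> connect (induced W) w w' ->
  path (nand_rel (e^~ w) (e w')) a1 q1 /\ path (nand_rel (e^~ w) (e w')) a2 q2.
Proof.
move=> wW ww'; split; first exact: longest_linkage_no_bypass L wW ww'.
apply: longest_linkage_no_bypass (longest_linkage_sym L) _ _; by rewrite outside_catC.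
Qed.

Lemma longest_linkage_outside_connected w w' : w \in W -> w' \in W ->
  connect (induced W) w w'.
Proof.
apply: degree_sum_strongly_connected => w1 w2 w1W w2W w12.
have [p1 p2] := longest_linkage_no_bypass_both w1W w12.
have cS : count (e^~ w1) S + count (e w2) S <= (size S).+2.
  rewrite !count_cat size_cat addnACA -addnS -addSn.
  exact: leq_add (nand_path_count p1) (nand_path_count p2).
have := H_ore (WH w2W) (WH w1W); rewrite card_H outdeg_H indeg_H.
move: cS; move: (size S) => s; lia.
Qed.

Local Notation to_W := (fun x => 0 < outdeg_in W x).
Local Notation from_W := (fun x => 0 < indeg_in W x).

Lemma longest_linkage_no_to_from :
  path (nand_rel to_W from_W) a1 q1 /\ path (nand_rel to_W from_W) a2 q2.
Proof.
have nand_of_bypass a q :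
    (forall w w', w \in W -> w' \in W -> path (nand_rel (e^~ w) (e w')) a q) ->
    path (nand_rel to_W from_W) a q.
  move=> bypass; apply/idPn => /not_path_split[l1 [y [l2 [def_q /negPn /andP[]]]]].
  move=> /card_gt0P[w]; rewrite inE => /andP[wW xw] /card_gt0P[w']; rewrite inE => /andP[w'W w'y].
  move: (bypass w w' wW w'W); rewrite def_q cat_path => /andP[_] /=.
  by rewrite xw w'y.
by split; apply: nand_of_bypass => w w' wW w'W;
  have [] := longest_linkage_no_bypass_both wW (longest_linkage_outside_connected wW w'W).
Qed.

Let outdeg_S x : x \in S -> ~~ to_W x -> outdeg_in H x < size S.
Proof.
move=> xS; rewrite outdeg_H -eqn0Ngt => /eqP->; rewrite add0n.
exact: count_lt_size xS (negbT (e_irr x)).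
Qed.

Let indeg_S x : x \in S -> ~~ from_W x -> indeg_in H x < size S.
Proof.
move=> xS; rewrite indeg_H -eqn0Ngt => /eqP->; rewrite add0n.
exact: count_lt_size xS (negbT (e_irr x)).
Qed.

Let outdeg_W w : w \in W -> outdeg_in H w < #|W| + count from_W S.
Proof.
move=> wW; rewrite outdeg_H -addSn leq_add ?outdeg_in_lt //.
by apply: sub_count => x /= wx; apply/card_gt0P; exists w; rewrite inE wW.
Qed.

Let indeg_W w : w \in W -> indeg_in H w < #|W| + count to_W S.
Proof.
move=> wW; rewrite indeg_H -addSn leq_add ?indeg_in_lt //.
by apply: sub_count => x /= xw; apply/card_gt0P; exists w; rewrite inE wW.
Qed.

Let count_S_le2 (P : pred T) : count P (a1 :: q1) <= 1 -> count P (a2 :: q2) <= 1 ->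
  count P S <= 2.
Proof. by rewrite count_cat; apply: leq_add. Qed.

Let q1S : {subset q1 <= S}. Proof. by move=> x xq; rewrite mem_cat inE xq orbT. Qed.
Let q2S : {subset q2 <= S}. Proof. by move=> x xq; rewrite mem_cat !inE xq !orbT. Qed.

(* Only the first vertices of the two paths can then have an in-neighbour in
   [W]; degree counting forces all of [S] to have one, so both paths are
   single vertices and a path of [W] to a vertex of [Y1] extends the first. *)
Lemma longest_linkage_all_to : all to_W S -> False.
Proof.
rewrite all_cat => /andP[to1 to2]; have [nft1 nft2] := longest_linkage_no_to_from.
have nfrom1 : ~~ has from_W q1 by rewrite -all_predC; apply: nand_path_all_l nft1 to1.
have nfrom2 : ~~ has from_W q2 by rewrite -all_predC; apply: nand_path_all_l nft2 to2.
have /card_gt0P[w] : 0 < outdeg_in W a1 by apply: (allP to1); rewrite mem_head.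
rewrite inE => /andP[wW a1w].
have from_S y : y \in S -> from_W y.
  move=> yS; apply/negPn/negP => nfy.
  apply: ore_S_W_contra (indeg_S yS nfy) (outdeg_W wW) _ (ore_S_W (WH wW) (SH_mem yS)).
  exact: count_S_le2 (count_cons_le1 a1 nfrom1) (count_cons_le1 a2 nfrom2).
have nil_q q : ~~ has from_W q -> {subset q <= S} -> q = [::].
  by case: q => // y q /= /norP[nfy _] /(_ y (mem_head _ _)) /from_S; rewrite (negbTE nfy).
have q1_nil := nil_q q1 nfrom1 q1S; have q2_nil := nil_q q2 nfrom2 q2S.
have [y /and3P[yY ya1 ya2]] := exists_avoid2 a1 a2 Y1_gt2.
have yW : y \in W by rewrite inE (subsetP Y1H _ yY) q1_nil q2_nil !inE negb_or ya1 ya2.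
have [r [pr lr ur rW]] := connect_induced_path wW (longest_linkage_outside_connected wW yW).
by apply: (longest_linkage_no_suffix L pr ur rW); rewrite ?lr ?q1_nil.
Qed.

Lemma longest_linkage_all_from : all from_W S -> False.
Proof.
move=> from_S; move: (from_S); rewrite all_cat => /andP[from1 from2].
have [nft1 nft2] := longest_linkage_no_to_from.
have nto1 : ~~ has to_W (belast a1 q1) by rewrite -all_predC; apply: nand_path_all_r nft1 from1.
have nto2 : ~~ has to_W (belast a2 q2) by rewrite -all_predC; apply: nand_path_all_r nft2 from2.
have to_S x : x \in S -> to_W x.
  move=> xS; apply/negPn/negP => ntx.
  have /card_gt0P[w] : 0 < indeg_in W x by apply: (allP from_S).
  rewrite inE => /andP[wW wx].
  apply: ore_S_W_contra (outdeg_S xS ntx) (indeg_W wW) _ _.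
    exact: count_S_le2 (count_belast_le1 nto1) (count_belast_le1 nto2).
  by rewrite [outdeg_in _ _ + _]addnC; apply: ore_S_W (SH_mem xS) (WH wW).
have nil_q a q : a \in S -> ~~ has to_W (belast a q) -> q = [::].
  by case: q => // y q aS /= /norP[nta _]; move: (to_S a aS); rewrite (negbTE nta).
have q1_nil := nil_q a1 q1 (mem_head _ _) nto1.
have q2_nil : q2 = [::] by apply: nil_q nto2; rewrite mem_cat mem_head orbT.
have /card_gt0P[w] : 0 < indeg_in W a1 by apply: (allP from1); rewrite mem_head.
rewrite inE => /andP[wW wa1].
have [x /and3P[xX xa1 xa2]] := exists_avoid2 a1 a2 X1_gt2.
have xW : x \in W by rewrite inE (subsetP X1H _ xX) q1_nil q2_nil !inE negb_or xa1 xa2.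
have [r [pr lr ur rW]] := connect_induced_path xW (longest_linkage_outside_connected xW wW).
by apply: (longest_linkage_no_prefix L pr ur rW); rewrite ?lr.
Qed.

Lemma longest_linkage_large : #|H| + 3 <= 2 * size S.
Proof.
have [x xS nto] : exists2 x, x \in S & ~~ to_W x.
  by apply/allPn/negP => /longest_linkage_all_to.
have [x' x'S nfrom] : exists2 x, x \in S & ~~ from_W x.
  by apply/allPn/negP => /longest_linkage_all_from.
have := H_ore (SH_mem xS) (SH_mem x'S).
have := outdeg_S xS nto; have := indeg_S x'S nfrom; lia.
Qed.

End LongestLinkage.

Lemma linkage_size_le (H X1 Y1 X2 Y2 : {set T}) a1 q1 a2 q2 :
  linkage H X1 Y1 X2 Y2 a1 q1 a2 q2 -> size q1 + size q2 + 2 <= #|H|.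
Proof.
case=> [[_ _ _ h1] [_ _ _ h2] u].
have /subset_leq_card : [set x in (a1 :: q1) ++ (a2 :: q2)] \subset H.
  by apply/subsetP => x; rewrite inE mem_cat => /orP[] xq; [apply: (allP h1) | apply: (allP h2)].
by rewrite cardsE (card_uniqP u) size_cat /=; lia.
Qed.

Lemma exists_longest_linkage (H X1 Y1 X2 Y2 : {set T}) a1 q1 a2 q2 :
  linkage H X1 Y1 X2 Y2 a1 q1 a2 q2 ->
  exists b1 r1 b2 r2, longest_linkage H X1 Y1 X2 Y2 b1 r1 b2 r2.
Proof.
have [n] := ubnP (#|H| - (size q1 + size q2)).
elim: n a1 q1 a2 q2 => // n IHn a1 q1 a2 q2 n_gt L.
have [[b1 [r1 [b2 [r2 [L' longer]]]]]|no_longer] := classic (exists b1 r1 b2 r2,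
    linkage H X1 Y1 X2 Y2 b1 r1 b2 r2 /\ size q1 + size q2 < size r1 + size r2).
  by apply: IHn (L'); have := linkage_size_le L'; lia.
exists a1, q1, a2, q2; split=> // b1 r1 b2 r2 L'; rewrite leqNgt; apply/negP => longer.
by apply: no_longer; exists b1, r1, b2, r2.
Qed.

End Digraph.

Section LongestSCycle.
Variables (T : finType) (e : rel T) (s : seq T).

Lemma S_cycle_rot i c : S_cycle e s c -> S_cycle e s (rot i c).
Proof.
case=> /and3P[uc c_ge2 cyc] [j sj]; split.
  by rewrite /dcycle rot_uniq size_rot rot_cycle uc c_ge2 cyc.
exists (rot_add (rot i c) (size (rot i c) - i) j).
by rewrite -rot_rot_add -/(rotr i (rot i c)) rotK.
Qed.

Lemma subseq_cons_cat (v : T) p q : subseq (v :: q) (v :: p ++ q).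
Proof. exact: (cat_subseq (subseq_refl [:: v]) (suffix_subseq p q)). Qed.

(* The vertices of [v :: q] keep their cyclic order, so [s] stays a
   subsequence of a suitable rotation. *)
Lemma S_cycle_insert v q a r : S_cycle e s (v :: q) -> path e a r -> uniq (a :: r) ->
  all (fun x => x \notin v :: q) (a :: r) -> e v a -> e (last a r) (head v q) ->
  S_cycle e s (v :: a :: r ++ q).
Proof.
case=> /and3P[u sz cy] [j sj] pr ur al ev el.
case: q u sz cy sj el al => [|y q] // u sz cy sj el al.
split.
  apply/and3P; split => //.
    rewrite -cat1s -cat_cons uniq_catCA cat_uniq ur cat1s u andbT.
    apply/hasPn => z; rewrite !inE => zz; apply/negP => zr.
    by move/allP: al => /(_ z zr); rewrite !inE zz.
  move: cy; rewrite /cycle /= rcons_cat cat_path /= => /andP[_ pq].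
  by rewrite ev pr el pq.
case: (leqP j (size (y :: q))) => hj; last first.
  exists 0; rewrite rot0; apply: subseq_trans sj _.
  by rewrite rot_oversize //; exact: (subseq_cons_cat v (a :: r) (y :: q)).
case: j sj hj => [|j] sj hj.
  exists 0; rewrite rot0; apply: subseq_trans sj _.
  by rewrite rot0; exact: (subseq_cons_cat v (a :: r) (y :: q)).
exists (j.+1 + size (a :: r)); apply: subseq_trans sj _.
rewrite [rot j.+1 _]/rot /rot addSn /= -cat_cons drop_cat take_cat ltnNge leq_addl /= addnK.
by apply: cat_subseq => //; exact: (subseq_cons_cat v (a :: r) (take j (y :: q))).
Qed.

Lemma longest_S_cycle_detour c a r :
  S_cycle e s c -> (forall c', S_cycle e s c' -> size c' <= size c) ->
  path e a r -> uniq (a :: r) -> all (fun x => x \notin c) (a :: r) ->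
  #|[set x | (x \in c) && e x a]| + #|[set x | (x \in c) && e (last a r) x]| <= size c.
Proof.
move=> Sc longest pr ur ar_c.
have uc : uniq c by case: Sc => /and3P[].
set b := last a r.
pose A := [set x | (x \in c) && e x a].
pose B := [set x | (x \in c) && e b (next c x)].
have -> : #|[set x | (x \in c) && e b x]| = #|B|.
  rewrite -[#|B|](card_imset _ (can_inj (prev_next uc))); apply: eq_card => x.
  rewrite [X in X = _]inE; apply/idP/imsetP.
    move=> /andP[xc ebx]; exists (prev c x); last by rewrite next_prev.
    by rewrite inE mem_prev xc next_prev.
  by case=> y; rewrite inE => /andP[yc eb] ->; rewrite mem_next yc.
rewrite leqNgt; apply/negP => AB_big.
have [v] : exists2 v, v \in A & v \in B.
  apply: (meet_of_card (Z := [set x in c])); last by rewrite cardsE (card_uniqP uc).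
  - by apply/subsetP => x; rewrite !inE => /andP[].
  - by apply/subsetP => x; rewrite !inE => /andP[].
rewrite !inE => /andP[vc eva] /andP[_ ebn].
case: (rot_to vc) => i q def_c.
have Sq := S_cycle_rot i Sc; rewrite def_c in Sq.
have next_v : next c v = head v q.
  rewrite -(next_rot i uc) def_c; case: q {def_c Sq} => [|y q] /=; by rewrite eqxx.
have ar_q : all (fun x => x \notin v :: q) (a :: r).
  by apply/allP => x /(allP ar_c); rewrite -def_c mem_rot.
have eb_next : e (last a r) (head v q) by rewrite -next_v.
have := longest _ (S_cycle_insert Sq pr ur ar_q eva eb_next).
by rewrite /= size_cat -(size_rot i c) def_c /=; lia.
Qed.

End LongestSCycle.

Lemma ore_dense_outside_longest_S_cycle (T : finType) (e : rel T) k (s c : seq T) :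
  3 <= k -> irreflexive e -> min_semideg_ge e ((#|T| + k).+1 %/ 2 - 1) ->
  S_cycle e s c -> (forall c', S_cycle e s c' -> size c' <= size c) ->
  ore_dense e [set v | v \notin c].
Proof.
move=> k_ge3 e_irr semideg Sc longest.
set H := [set v | v \notin c].
have uc : uniq c by case: Sc => /and3P[].
have card_T : #|T| = size c + #|H|.
  have -> : #|T| = #|[set x : T | true]| by apply: eq_card => x; rewrite inE.
  rewrite (card_split (fun x => x \in c)) card_mem_seq // count_predT.
  by congr (_ + _); apply: eq_card => x; rewrite !inE andbT.
have indeg_T v : indeg e v = #|[set x | (x \in c) && e x v]| + indeg_in e H v.
  rewrite /indeg (card_split (fun x => x \in c)); congr (_ + _).
  by apply: eq_card => x; rewrite !inE.
have outdeg_T v : outdeg e v = #|[set x | (x \in c) && e v x]| + outdeg_in e H v.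
  rewrite /outdeg (card_split (fun x => x \in c)); congr (_ + _).
  by apply: eq_card => x; rewrite !inE.
have reach_ore a b : a \in H -> connect (induced e H) a b ->
    #|H| < indeg_in e H a + outdeg_in e H b.
  move=> aH ab; have [r [pr <- ur arH]] := connect_induced_path aH ab.
  have ar_c : all (fun x => x \notin c) (a :: r) by apply/allP => x /arH; rewrite inE.
  have := longest_S_cycle_detour Sc longest pr ur ar_c.
  have [_ in_a] := semideg a; have [out_b _] := semideg (last a r).
  move: in_a out_b; rewrite indeg_T outdeg_T card_T; lia.
have H_conn v u : v \in H -> u \in H -> connect (induced e H) v u.
  apply: (degree_sum_strongly_connected e_irr) => a b aH _ ab.
  by rewrite addn1 leqW // ltnW // reach_ore.
by move=> u v uH vH; apply: reach_ore vH (H_conn v u vH uH).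
Qed.

Section HPaths.
Variables (T : finType) (e : rel T) (c : seq T) (x1 x2 y1 y2 : T).
Hypotheses (x1c : x1 \in c) (x2c : x2 \in c) (y1c : y1 \in c) (y2c : y2 \in c).
Hypothesis uniq_xy : uniq [:: x1; x2; y1; y2].

Local Notation H := [set v | v \notin c].
Local Notation out_H x := [set h | (h \notin c) && e x h].
Local Notation in_H y := [set h | (h \notin c) && e h y].

Lemma H_paths_of_linkage a1 q1 a2 q2 :
  linkage e H (out_H x1) (in_H y1) (out_H x2) (in_H y2) a1 q1 a2 q2 ->
  [/\ H_path e c x1 y1 (a1 :: q1), H_path e c x2 y2 (a2 :: q2),
      [disjoint (x1 :: rcons (a1 :: q1) y1) & (x2 :: rcons (a2 :: q2) y2)]
    & #|[set v | (v \in x1 :: rcons (a1 :: q1) y1) || (v \in x2 :: rcons (a2 :: q2) y2)]|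
       = size q1 + size q2 + 6].
Proof.
move=> [[a1X l1Y p1 h1] [a2X l2Y p2 h2] uS].
move: a1X l1Y a2X l2Y; rewrite !inE => /andP[_ e1] /andP[_ e2] /andP[_ e3] /andP[_ e4].
have offc (q : seq T) : all (fun x => x \in H) q -> all (fun v => v \notin c) q.
  by move/allP => qH; apply/allP => x /qH; rewrite inE.
have {h1}al1 := offc _ h1; have {h2}al2 := offc _ h2.
set P1 := x1 :: rcons (a1 :: q1) y1; set P2 := x2 :: rcons (a2 :: q2) y2.
have pe := perm_two_paths x1 y1 x2 y2 (a1 :: q1) (a2 :: q2).
have uP : uniq (P1 ++ P2).
  rewrite (perm_uniq pe) cat_uniq uS andbT.
  have -> : uniq [:: x1; y1; x2; y2].
    rewrite (perm_uniq (_ : perm_eq _ [:: x1; x2; y1; y2])) // perm_cons.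
    by apply/permPl; exact: (perm_catCA [:: y1] [:: x2] [:: y2]).
  apply/hasPn => z zS; rewrite !inE; apply/negP => zxy.
  have : z \notin c.
    by move: zS; rewrite mem_cat => /orP[] zs; [exact: (allP al1) | exact: (allP al2)].
  by case/or4P: zxy => /eqP ->; rewrite ?x1c ?x2c ?y1c ?y2c.
move: (uP); rewrite cat_uniq => /and3P[uP1 P12 uP2].
split.
- by apply/and4P; split; rewrite //= rcons_path p1 e1 e2.
- by apply/and4P; split; rewrite //= rcons_path p2 e3 e4.
- by rewrite disjoint_has has_sym.
- have -> : size q1 + size q2 + 6 = size (P1 ++ P2).
    by rewrite size_cat /= !size_rcons /= !addSn !addnS addn0.
  by rewrite -(card_uniqP uP); apply: eq_card => v; rewrite inE mem_cat.
Qed.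

End HPaths.

Theorem corollary12 (T : finType) (e : rel T) (k : nat) (s c : seq T)
    (x1 x2 y1 y2 : T) :
  3 <= k ->
  irreflexive e ->
  min_semideg_ge e ((#|T| + k).+1 %/ 2 - 1) ->
  size s = k -> uniq s ->
  S_cycle e s c ->
  (forall c', S_cycle e s c' -> size c' <= size c) ->
  size c < #|T| ->
  x1 \in Tset e c 3 -> x2 \in Tset e c 3 -> y1 \in Fset e c 3 -> y2 \in Fset e c 3 ->
  uniq [:: x1; x2; y1; y2] ->
  (exists q1 q2 : seq T,
      [/\ H_path e c x1 y1 q1, H_path e c x2 y2 q2
        & [disjoint (x1 :: rcons q1 y1) & (x2 :: rcons q2 y2)]])
  /\
  (15 <= Hsize c ->
   x1 \in Tset e c 8 -> x2 \in Tset e c 8 -> y1 \in Fset e c 8 -> y2 \in Fset e c 8 ->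
   exists q1 q2 : seq T,
      [/\ H_path e c x1 y1 q1, H_path e c x2 y2 q2,
          [disjoint (x1 :: rcons q1 y1) & (x2 :: rcons q2 y2)]
        & Hsize c <= 6 * #|[set v | (v \in x1 :: rcons q1 y1) || (v \in x2 :: rcons q2 y2)]|]).
Proof.
move=> k_ge3 e_irr semideg _ _ Sc longest _ x1T x2T y1F y2F uniq_xy.
have H_ore := ore_dense_outside_longest_S_cycle k_ge3 e_irr semideg Sc longest.
move: x1T x2T y1F y2F; rewrite !inE.
move=> /andP[x1c X1_ge3] /andP[x2c X2_ge3] /andP[y1c Y1_ge3] /andP[y2c Y2_ge3].
have subH (P : pred T) : [set h | (h \notin c) && P h] \subset [set v | v \notin c].
  by apply/subsetP => x; rewrite !inE => /andP[].
have [a1 [q1 [a2 [q2 L]]]] :=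
  exists_linkage e_irr H_ore (subH _) (subH _) (subH _) (subH _) X1_ge3 Y1_ge3 X2_ge3 Y2_ge3.
split.
  have [P1 P2 disj _] := H_paths_of_linkage x1c x2c y1c y2c uniq_xy L.
  by exists (a1 :: q1), (a2 :: q2).
move=> _ _ _ _ _; have [b1 [r1 [b2 [r2 longL]]]] := exists_longest_linkage L.
have large := longest_linkage_large e_irr H_ore (subH _) (subH _) X1_ge3 Y1_ge3 longL.
have [P1 P2 disj card_P] := H_paths_of_linkage x1c x2c y1c y2c uniq_xy longL.1.
exists (b1 :: r1), (b2 :: r2); split => //.
rewrite card_P /Hsize; move: large; rewrite size_cat /=.
move: #|_| (size r1) (size r2) => h n1 n2; lia.
Qed.
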